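(* Let $m\ge 2$ and $\alpha\in[0,1]$. Define $w_k$ and $t_k$ by the recursion given in the context. There exists a deterministic voting rule $f$ such that for every $k\in[m-1]$ and every election $\mathcal E=(N,A,\vec\sigma)$ with $m$ alternatives whose profile $\vec\sigma$ is moderate-up-to-$k$, $$\mathsf{dist}_\alpha(f(\vec\sigma),\mathcal E)\le 2+\max(\alpha,t_k).$$
   Context: An election $\mathcal E=(N,A,\vec\sigma)$ has a finite set $N$ of $n$ agents, a set $A$ of $m$ alternatives, and a profile $\vec\sigma=(\sigma_1,\dots,\sigma_n)$. Each $\sigma_i=(\pi_i,\Join_i)$ consists of a bijection $\pi_i:[m]\to A$, where $\pi_i(1)$ is agent $i$'s most preferred alternative, and a map $\Join_i:[m-1]\to\{\succ,\succ\!\!\succ\}$. A metric $d$ on $N\cup A$ is nonnegative and symmetric, satisfies the triangle inequality, and has $d(x,x)=0$. The profile $\vec\sigma$ is $\alpha$-consistent with $d$ (mandatory elicitation) if for every agent $i$ and every $j\in[m-1]$: - if $\Join_i(j)=\,\succ$, then $d(i,\pi_i(j+1))\ge d(i,\pi_i(j))>\alpha\, d(i,\pi_i(j+1))$; - if $\Join_i(j)=\,\succ\!\!\succ$, then $d(i,\pi_i(j))\le\alpha\, d(i,\pi_i(j+1))$. Let $\mathrm{sc}_d(a)=\sum_{i\in N}d(i,a)$ and $\mathsf{dist}_\alpha(a,\mathcal E)=\sup_d \mathrm{sc}_d(a)/\min_{b\in A}\mathrm{sc}_d(b)$, the supremum over metrics $d$ with which $\vec\sigma$ is $\alpha$-consistent.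 A preference $\sigma=(\pi,\Join)$ is moderate-up-to-$k$ if $\Join(k+1)=\,\succ\!\!\succ$ and $\Join(i)=\,\succ$ for all $i\in[k]$. If $\Join$ contains no $\succ\!\!\succ$, the preference is moderate-up-to-$(m-1)$. A profile is moderate-up-to-$k$ if every agent's preference is. Define - $w_1=\frac{\alpha+1}{3\alpha+1}$ and $t_1=\frac{1-\alpha}{3\alpha+1}$; - for $k>1$: $w_k=1-\frac{2\alpha}{(1-\alpha)t_{k-1}+2w_{k-1}+2\alpha}$ and $t_k=w_k+(1-w_k)t_{k-1}$. *)

From HB Require Import structures.
From mathcomp Require Import all_boot all_order all_algebra all_fingroup.
From mathcomp Require Import all_classical all_reals ereal.
Set Implicit Arguments. Unset Strict Implicit. Unset Printing Implicit Defensive.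
Import Order.TTheory GRing.Theory Num.Theory.
Local Open Scope ring_scope.
Local Open Scope classical_set_scope.

(* Positions in a ranking are
   0-based: pi 0 is the most preferred alternative (paper's pi(1)),
   and the separator at 0-based index j : 'I_(m-1) sits between positions
   j and j+1 (paper's Join(j+1)). *)
Inductive intensity := Weak | Strong .

Record pref (m : nat) := Pref {
  ranking : {perm 'I_m};            (* position -> alternative, bijection *)
  join : 'I_(m - 1) -> intensity }.

Definition profile (m n : nat) := 'I_n -> pref m.

Definition point (n m : nat) := ('I_n + 'I_m)%type.

Definition is_metric (R : realType) (T : Type) (d : T -> T -> R) : Prop :=
  (forall x y, 0 <= d x y) /\ (forall x y, d x y = d y x) /\
  (forall x, d x x = 0) /\ (forall x y z, d x z <= d x y + d y z).

Definition consistent (R : realType) (alpha : R) (m n : nat)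
    (sigma : profile m n) (d : point n m -> point n m -> R) : Prop :=
  forall (i : 'I_n) (j : 'I_(m - 1)) (p q : 'I_m),
    val p = val j -> val q = (val j).+1 ->
    let dp := d (inl i) (inr (ranking (sigma i) p)) in
    let dq := d (inl i) (inr (ranking (sigma i) q)) in
    match join (sigma i) j with
    | Weak => dq >= dp /\ dp > alpha * dq
    | Strong => dp <= alpha * dq
    end.

Definition sc (R : realType) (n m : nat) (d : point n m -> point n m -> R)
    (a : 'I_m) : R := \sum_(i < n) d (inl i) (inr a).

(* min_{b in A} sc_d(b); the fold starts at sc_d(a), which is itself one of
   the values, so this is exactly the minimum over A. *)
Definition sc_min (R : realType) (n m : nat) (d : point n m -> point n m -> R)
    (a : 'I_m) : R := \big[Order.min/sc d a]_(b : 'I_m) sc d b.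

Definition distortion (R : realType) (alpha : R) (m n : nat)
    (sigma : profile m n) (a : 'I_m) : \bar R :=
  ereal_sup [set ((sc d a / sc_min d a)%:E) | d in
             [set d : point n m -> point n m -> R |
                is_metric d /\ consistent alpha sigma d]].

(* moderate-up-to-k, k is the paper's k (1-based positions) *)
Definition moderate_pref (m : nat) (k : nat) (s : pref m) : Prop :=
  (forall j : 'I_(m - 1), (val j < k)%N -> join s j = Weak) /\
  (forall j : 'I_(m - 1), val j = k -> join s j = Strong).

Definition moderate_profile (m n k : nat) (sigma : profile m n) : Prop :=
  forall i, moderate_pref k (sigma i).

(* (w_k, t_k); index 0 is a dummy, index k >= 1 is the paper's (w_k, t_k). *)
Fixpoint wt (R : realType) (alpha : R) (k : nat) : R * R :=
  match k with
  | 0 => (0, 0)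
  | k'.+1 =>
    match k' with
    | 0 => ((alpha + 1) / (3 * alpha + 1), (1 - alpha) / (3 * alpha + 1))
    | _ => let p := wt alpha k' in
           let w := 1 - 2 * alpha / ((1 - alpha) * p.2 + 2 * p.1 + 2 * alpha) in
           (w, w + (1 - w) * p.2)
    end
  end.

Definition w_ (R : realType) (alpha : R) (k : nat) : R := (wt alpha k).1.
Definition t_ (R : realType) (alpha : R) (k : nat) : R := (wt alpha k).2.

(* Every agent spreads one unit of weight over its top k+1 alternatives: position 0 gets
   w_k and the remaining 1 - w_k is spread over the positions below by the same rule with
   k-1.  A fractional veto argument (each agent in turn removes weight from its least
   preferred alternative still carrying weight) yields an alternative a and a transport plan
   from agents to these weights that sends each agent only to alternatives it ranks no
   higher than a.  Hence, for any b, the triangle inequality through b bounds sc(a) by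
   sc(b) plus the expected distance from b to the weight of each agent i.  For a
   moderate-up-to-k agent this is at most (1 + max(alpha, t_k)) d(i, b): if b lies in the
   top k+1 of i, an induction on k along the weak separators gives 1 + t_k; otherwise the
   strong separator after position k keeps every weighted alternative within alpha d(i, b)
   of i. *)

From Pilot Require Import Defs.
From HB Require Import structures.
From mathcomp Require Import all_boot all_order all_algebra all_fingroup.
From mathcomp Require Import all_classical all_reals ereal.
From mathcomp Require Import lra zify ring.
Import Order.TTheory GRing.Theory Num.Theory.
Local Open Scope ring_scope.

Set Implicit Arguments. Unset Strict Implicit. Unset Printing Implicit Defensive.

Lemma nondecn_le_upto (R : numDomainType) k (x : nat -> R) s t :
  (forall r, (r < k)%N -> x r <= x r.+1) -> (s <= t)%N -> (t <= k)%N -> x s <= x t.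
Proof.
move=> x_incr le_st; elim: t le_st => [|t IH]; first by rewrite leqn0 => /eqP ->.
rewrite leq_eqVlt => /orP[/eqP -> //|lt_st] lt_tk.
exact: le_trans (IH lt_st (ltnW lt_tk)) (x_incr t lt_tk).
Qed.

Section ModerateLottery.
Variables (R : realType) (alpha : R).
Hypotheses (alpha_ge0 : 0 <= alpha) (alpha_le1 : alpha <= 1).

Definition wt_step (p : R * R) : R * R :=
  let w := 1 - 2 * alpha / ((1 - alpha) * p.2 + 2 * p.1 + 2 * alpha) in
  (w, w + (1 - w) * p.2).

(* From the fictitious (w_0, t_0) = (1, -1) one step gives the paper's (w_1, t_1). *)
Definition wt_seq (k : nat) : R * R := iter k wt_step (1, -1).
Definition w_seq k := (wt_seq k).1.
Definition t_seq k := (wt_seq k).2.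
Definition wt_den k := (1 - alpha) * t_seq k + 2 * w_seq k + 2 * alpha.

Lemma wt_seqE k : wt_seq k.+1 = wt alpha k.+1.
Proof.
elim: k => [|k IH]; last by rewrite /wt_seq iterS -/(wt_seq k.+1) IH.
have den_neq0 : 3 * alpha + 1 != 0 by rewrite gt_eqF //; have := alpha_ge0; lra.
rewrite /= /wt_step /=.
have -> : (1 - alpha) * -1 + 2 * 1 + 2 * alpha = 3 * alpha + 1 by ring.
by congr pair; field.
Qed.

Lemma t_seqE k : t_seq k.+1 = t_ alpha k.+1.
Proof. by rewrite /t_seq /t_ wt_seqE. Qed.

Lemma w_seqS k : w_seq k.+1 = 1 - 2 * alpha / wt_den k.
Proof. by []. Qed.

Lemma t_seqS k : t_seq k.+1 = w_seq k.+1 + (1 - w_seq k.+1) * t_seq k.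
Proof. by []. Qed.

Lemma wt_den_ge k : t_seq k <= 1 -> 1 <= t_seq k + 2 * w_seq k -> 1 + alpha <= wt_den k.
Proof. by move=> t_le1 tw_ge1; rewrite /wt_den; have := alpha_ge0; nra. Qed.

Lemma wt_seq_invariant k :
  [/\ 0 <= w_seq k <= 1, -1 <= t_seq k <= 1 & 1 <= t_seq k + 2 * w_seq k].
Proof.
have a0 := alpha_ge0; have a1 := alpha_le1.
elim: k => [|k [/andP[w_ge0 w_le1] /andP[t_ge t_le1] tw_ge1]].
  by rewrite /w_seq /t_seq /=; split; lra.
have D_ge := wt_den_ge t_le1 tw_ge1.
set D := wt_den k in D_ge.
set u := 2 * alpha / D.
have uD : u * D = 2 * alpha by rewrite /u mulfVK // gt_eqF //; lra.
rewrite t_seqS w_seqS -/D -/u.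
have u_ge0 : 0 <= u by rewrite /u divr_ge0 //; lra.
have u_le1 : u <= 1 by nra.
have : u * (3 - t_seq k) <= 2 by rewrite /D /wt_den in D_ge uD *; nra.
by split; [apply/andP; split|apply/andP; split|]; nra.
Qed.

Lemma wt_den_gt0 k : 0 < wt_den k.
Proof.
have [_ /andP[_ t_le1] tw_ge1] := wt_seq_invariant k.
by have := wt_den_ge t_le1 tw_ge1; have := alpha_ge0; lra.
Qed.

Lemma w_seqS_den k : (1 - w_seq k.+1) * wt_den k = 2 * alpha.
Proof. by rewrite w_seqS subKr mulfVK // gt_eqF // wt_den_gt0. Qed.

Lemma tw_seqS_den k :
  (t_seq k.+1 + w_seq k.+1) * wt_den k = 2 * (t_seq k + 2 * w_seq k).
Proof.
have -> : t_seq k.+1 + w_seq k.+1 = 2 - (1 - w_seq k.+1) * (2 - t_seq k).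
  by rewrite t_seqS; ring.
by rewrite mulrBl mulrAC w_seqS_den /wt_den; ring.
Qed.

(* The recursion for w_(k+1) is chosen to make this tight when x0 = alpha * x1. *)
Lemma wt_step_le k (x0 x1 : R) : 0 <= x1 -> alpha * x1 <= x0 ->
  (1 - w_seq k.+1) * ((t_seq k + 2 * w_seq k) * x1) <= (t_seq k.+1 + w_seq k.+1) * x0.
Proof.
move=> x1_ge0 x1_le.
have [_ _ tw_ge1] := wt_seq_invariant k.
set e := t_seq k + 2 * w_seq k in tw_ge1 *.
rewrite -(ler_pM2r (wt_den_gt0 k)).
have -> : (1 - w_seq k.+1) * (e * x1) * wt_den k = 2 * e * (alpha * x1).
  by rewrite mulrAC w_seqS_den; ring.
have -> : (t_seq k.+1 + w_seq k.+1) * x0 * wt_den k = 2 * e * x0.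
  by rewrite mulrAC tw_seqS_den.
by apply: ler_wpM2l => //; lra.
Qed.

Fixpoint lottery (k s : nat) : R :=
  match k, s with
  | 0, 0 => 1
  | 0, _.+1 => 0
  | k'.+1, 0 => w_seq k'.+1
  | k'.+1, s'.+1 => (1 - w_seq k'.+1) * lottery k' s'
  end.

Lemma lottery_ge0 k s : 0 <= lottery k s.
Proof.
elim: k s => [|k IH] [|s] //=; have [/andP[w_ge0 w_le1] _ _] := wt_seq_invariant k.+1.
  exact: w_ge0.
by rewrite mulr_ge0 ?subr_ge0.
Qed.

Lemma lottery_eq0 k s : (k < s)%N -> lottery k s = 0.
Proof. by elim: k s => [|k IH] [|s] //= /IH ->; rewrite mulr0. Qed.

Lemma sum_lottery k N : (k < N)%N -> \sum_(s < N) lottery k s = 1.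
Proof.
elim: k N => [|k IH] [|N] // ltkN; rewrite big_ord_recl /=.
  by rewrite big1 ?addr0.
by rewrite -mulr_sumr IH // mulr1 addrC subrK.
Qed.

Lemma sum_lotteryS k N (x : nat -> R) :
  \sum_(s < N.+1) lottery k.+1 s * x s =
  w_seq k.+1 * x 0%N + (1 - w_seq k.+1) * \sum_(s < N) lottery k s * x s.+1.
Proof. by rewrite big_ord_recl mulr_sumr; under eq_bigr do rewrite /= -mulrA. Qed.

Lemma sum_lottery0 N (x : nat -> R) : \sum_(s < N.+1) lottery 0 s * x s = x 0%N.
Proof. by rewrite big_ord_recl big1 ?addr0 ?mul1r // => s _; rewrite mul0r. Qed.

Definition alpha_chain k (x : nat -> R) :=
  forall s, (s < k)%N -> x s <= x s.+1 /\ alpha * x s.+1 <= x s.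

Lemma alpha_chainS k x : alpha_chain k.+1 x -> alpha_chain k (fun s => x s.+1).
Proof. by move=> x_chain s lt_sk; apply: x_chain. Qed.

Lemma alpha_chain_le k x s t :
  alpha_chain k x -> (s <= t)%N -> (t <= k)%N -> x s <= x t.
Proof. by move=> x_chain le_st le_tk; apply: nondecn_le_upto le_tk => // r /x_chain[]. Qed.

Lemma lottery_chain_le k N x : (k < N)%N -> (forall s, 0 <= x s) ->
  alpha_chain k x -> \sum_(s < N) lottery k s * x s <= (t_seq k + 2 * w_seq k) * x 0%N.
Proof.
elim: k N x => [|k IH] [|N] x // ltkN x_ge0 x_chain.
  by rewrite sum_lottery0 /t_seq /w_seq /=; lra.
have [/andP[w_ge0 w_le1] _ _] := wt_seq_invariant k.+1.
have step := wt_step_le k (x_ge0 1%N) (proj2 (x_chain 0%N isT)).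
have tail := IH N _ ltkN (fun s => x_ge0 s.+1) (alpha_chainS x_chain).
rewrite sum_lotteryS; apply: le_trans (lerD (lexx _) (ler_wpM2l _ tail)) _.
  by rewrite subr_ge0.
lra.
Qed.

Lemma lottery_triangle_le k N (x z : nat -> R) y : (k < N)%N ->
  (forall s, z s <= y + x s) ->
  \sum_(s < N) lottery k s * z s <= y + \sum_(s < N) lottery k s * x s.
Proof.
move=> ltkN z_le; rewrite -[y in y + _]mul1r -(sum_lottery ltkN) mulr_suml -big_split /=.
by apply: ler_sum => s _; rewrite -mulrDr ler_wpM2l ?lottery_ge0.
Qed.

Lemma lottery_mean_le k N (x : nat -> R) c : (k < N)%N -> 0 <= c ->
  (forall s, (s <= k)%N -> x s <= c) -> \sum_(s < N) lottery k s * x s <= c.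
Proof.
move=> ltkN c_ge0 x_le; rewrite -[c in _ <= c]mul1r -(sum_lottery ltkN) mulr_suml.
apply: ler_sum => s _; case: (leqP s k) => [le_sk|lt_ks].
  by rewrite ler_wpM2l ?lottery_ge0 ?x_le.
by rewrite lottery_eq0 // !mul0r.
Qed.

(* In the application x s and z s are the distances from agent i and from b to the
   alternative at position s of i's ranking, and r is the position of b. *)
Lemma lottery_near_le k N (x z : nat -> R) r : (k < N)%N -> (r <= k)%N ->
  (forall s, 0 <= x s) -> alpha_chain k x ->
  (forall s, z s <= x r + x s) -> z r = 0 ->
  \sum_(s < N) lottery k s * z s <= (1 + t_seq k) * x r.
Proof.
elim: k N x z r => [|k IH] [|N] x z r // ltkN le_rk x_ge0 x_chain z_le z_r.
  by move: le_rk z_r; rewrite leqn0 => /eqP -> z0; rewrite sum_lottery0 z0 /t_seq /=; lra.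
have [/andP[w_ge0 w_le1] _ _] := wt_seq_invariant k.+1.
rewrite ltnS in ltkN; rewrite sum_lotteryS t_seqS.
case: r le_rk z_le z_r => [|r] le_rk z_le z_r.
  have head := wt_step_le k (x_ge0 1%N) (proj2 (x_chain 0%N isT)).
  have tail : \sum_(s < N) lottery k s * z s.+1 <= x 0%N + (t_seq k + 2 * w_seq k) * x 1%N.
    apply: le_trans (lottery_triangle_le ltkN (fun s => z_le s.+1)) _.
    by rewrite lerD2l (lottery_chain_le ltkN (fun s => x_ge0 s.+1) (alpha_chainS x_chain)).
  have := ler_wpM2l (_ : 0 <= 1 - w_seq k.+1) tail.
  by rewrite z_r t_seqS subr_ge0 in head *; lra.
have tail := IH N _ _ r ltkN le_rk (fun s => x_ge0 s.+1) (alpha_chainS x_chain)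
  (fun s => z_le s.+1) z_r.
have z0_le : z 0%N <= 2 * x r.+1.
  by have := z_le 0%N; have := alpha_chain_le x_chain (leq0n r.+1) le_rk; lra.
have := ler_wpM2l w_ge0 z0_le.
have := ler_wpM2l (_ : 0 <= 1 - w_seq k.+1) tail.
rewrite subr_ge0; nra.
Qed.

Lemma lottery_far_le k N (x z : nat -> R) y : (k < N)%N -> 0 <= y ->
  (forall s, (s <= k)%N -> x s <= alpha * y) -> (forall s, z s <= y + x s) ->
  \sum_(s < N) lottery k s * z s <= (1 + alpha) * y.
Proof.
move=> ltkN y_ge0 x_le z_le; apply: le_trans (lottery_triangle_le ltkN z_le) _.
by rewrite mulrDl mul1r lerD2l lottery_mean_le // mulr_ge0.
Qed.

End ModerateLottery.

Section DominatingPlan.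
Variables (R : realFieldType) (I C : finType) (pos : I -> C -> nat).

Definition dominating_plan (s : C -> R) (b : I -> R) (a : C) (v : I -> C -> R) :=
  [/\ forall j c, 0 <= v j c, forall j, \sum_c v j c = b j,
      forall c, \sum_j v j c = s c & forall j c, v j c != 0 -> (pos j a <= pos j c)%N].

Lemma dominating_plan_add s b a v j0 c0 dl :
  dominating_plan s b a v -> 0 <= dl -> (pos j0 a <= pos j0 c0)%N ->
  dominating_plan (fun c => s c + (if c == c0 then dl else 0))
    (fun j => b j + (if j == j0 then dl else 0)) a
    (fun j c => v j c + (if j == j0 then if c == c0 then dl else 0 else 0)).
Proof.
move=> [v_ge0 v_row v_col v_dom] dl_ge0 a_c0; split.
- by move=> j c; rewrite addr_ge0 //; case: ifP => //; case: ifP.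
- move=> j; rewrite big_split /= v_row; congr (_ + _).
  by case: ifP => _; [rewrite -big_mkcond big_pred1_eq | rewrite big1].
- move=> c; rewrite big_split /= v_col; congr (_ + _).
  by rewrite -big_mkcond big_pred1_eq.
- move=> j c; case: (eqVneq j j0) => [->|_]; last by rewrite addr0; apply: v_dom.
  by case: (eqVneq c c0) => [-> //|_]; rewrite addr0; apply: v_dom.
Qed.

Lemma dominating_plan0 a : dominating_plan (fun _ => 0) (fun _ => 0) a (fun _ _ => 0).
Proof. by split=> // [j|c|j c]; rewrite ?big1 ?eqxx. Qed.

Lemma nonneg_eq0_or_gt0 (T : finType) (f : T -> R) :
  (forall x, 0 <= f x) -> f = (fun _ => 0) \/ exists x, 0 < f x.
Proof.
move=> f_ge0; case: (pickP [pred x | 0 < f x]) => [x /= fx_gt0|f_le0].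
  by right; exists x.
left; apply/funext => x; apply/eqP; rewrite eq_le f_ge0 andbT leNgt; apply/negbT/(f_le0 x).
Qed.

Lemma nonneg_sum_eq0 (T : finType) (f : T -> R) :
  (forall x, 0 <= f x) -> \sum_x f x = 0 -> f = fun _ => 0.
Proof.
move=> f_ge0 f0; apply/funext => x.
by apply: (psumr_eq0P (P := predT)) => // y _; apply: f_ge0.
Qed.

Lemma card_support_update (T : finType) (f g : T -> R) x :
  f x != 0 -> (forall y, y != x -> g y = f y) ->
  (#|support g| + (g x == 0%R) <= #|support f|)%N.
Proof.
move=> fx0 gf; have sub_gf : support g \subset support f.
  by apply/fintype.subsetP => y; rewrite !supportE; case: (eqVneq y x) => [->|/gf ->].
case: (eqVneq (g x) 0) => gx0; last by rewrite addn0 subset_leq_card.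
rewrite addn1; apply: proper_card; apply/properP; split => //.
by exists x; rewrite !supportE ?gx0 ?eqxx.
Qed.

Lemma card_support_transfer (s s' : C -> R) (b b' : I -> R) c j :
  s c != 0 -> b j != 0 -> (forall x, x != c -> s' x = s x) ->
  (forall y, y != j -> b' y = b y) -> (s' c == 0) || (b' j == 0) ->
  (#|support s'| + #|support b'| < #|support s| + #|support b|)%N.
Proof.
move=> sc0 bj0 s's b'b emptied.
have := card_support_update sc0 s's; have := card_support_update bj0 b'b.
by case/orP: emptied => ->; lia.
Qed.

(* Agent j with budget left pays for its worst still-supplied alternative c; whatever
   alternative a the rest of the process selects is still supplied, so j prefers a to c. *)
Lemma exists_dominating_plan (a0 : C) (s : C -> R) (b : I -> R) :
  (forall c, 0 <= s c) -> (forall j, 0 <= b j) -> \sum_c s c = \sum_j b j ->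
  exists a v, dominating_plan s b a v /\ (s = (fun _ => 0) \/ 0 < s a).
Proof.
have [N] := ubnP (#|support s| + #|support b|).
elim: N s b => // N IH s b lt_supp s_ge0 b_ge0 sum_sb.
have [b0|[j bj_gt0]] := nonneg_eq0_or_gt0 b_ge0.
  have s0 : s = fun _ => 0 by apply: nonneg_sum_eq0; rewrite // sum_sb b0 big1.
  by exists a0, (fun _ _ => 0); rewrite s0 b0; split; [apply: dominating_plan0|left].
have [s0|[c0 sc0_gt0]] := nonneg_eq0_or_gt0 s_ge0.
  have b0 : b = fun _ => 0 by apply: nonneg_sum_eq0; rewrite // -sum_sb s0 big1.
  by move: bj_gt0; rewrite b0 ltxx.
have [c sc_gt0 c_worst] := arg_maxnP (pos j) (sc0_gt0 : [pred c | 0 < s c] c0).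
set dl := Num.min (b j) (s c).
have dl_ge0 : 0 <= dl by rewrite le_min !ltW.
set s' := fun x => s x - (if x == c then dl else 0).
set b' := fun y => b y - (if y == j then dl else 0).
have sE : s = fun x => s' x + (if x == c then dl else 0) by apply/funext => x; rewrite subrK.
have bE : b = fun y => b' y + (if y == j then dl else 0) by apply/funext => y; rewrite subrK.
have s'_ge0 x : 0 <= s' x.
  by rewrite /s'; case: eqP => [->|_]; rewrite subr_ge0 ?ge_min ?lexx ?orbT.
have b'_ge0 y : 0 <= b' y.
  by rewrite /b'; case: eqP => [->|_]; rewrite subr_ge0 ?ge_min ?lexx.
have sum_sb' : \sum_x s' x = \sum_y b' y.
  by rewrite !sumrB -!big_mkcond !big_pred1_eq sum_sb.
have [s'0|[x s'x_gt0]] := nonneg_eq0_or_gt0 s'_ge0.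
  have b'0 : b' = fun _ => 0 by apply: nonneg_sum_eq0; rewrite // -sum_sb' s'0 big1.
  exists c, (fun y x => 0 + (if y == j then if x == c then dl else 0 else 0)).
  split; last by right.
  by rewrite sE bE s'0 b'0; apply: dominating_plan_add (dominating_plan0 c) dl_ge0 _.
have lt_supp' : (#|support s'| + #|support b'| < N)%N.
  have emptied : (s' c == 0) || (b' j == 0).
    by rewrite /s' /b' !eqxx !subr_eq0 /dl; case: leP; rewrite eqxx ?orbT.
  have s's c' : c' != c -> s' c' = s c' by move=> /negPf c'c; rewrite /s' c'c subr0.
  have b'b j' : j' != j -> b' j' = b j' by move=> /negPf j'j; rewrite /b' j'j subr0.
  by have := card_support_transfer (lt0r_neq0 sc_gt0) (lt0r_neq0 bj_gt0) s's b'b emptied; lia.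
have [a [v [plan [s'0|s'a_gt0]]]] := IH s' b' lt_supp' s'_ge0 b'_ge0 sum_sb'.
  by move: s'x_gt0; rewrite s'0 ltxx.
have sa_gt0 : 0 < s a by apply: lt_le_trans s'a_gt0 _; rewrite sE lerDl; case: eqP.
exists a, (fun y x => v y x + (if y == j then if x == c then dl else 0 else 0)).
split; last by right.
by rewrite sE bE; apply: dominating_plan_add => //; apply: c_worst.
Qed.
End DominatingPlan.

Definition position m n (sigma : profile m n) (i : 'I_n) (c : 'I_m) : nat :=
  ((ranking (sigma i))^-1)%g c.

Lemma sum_position (R : realType) m n (sigma : profile m n) i (F : nat -> R) :
  \sum_c F (position sigma i c) = \sum_(s < m) F s.
Proof.
rewrite (reindex_inj (@perm_inj _ (ranking (sigma i)))).
by apply: eq_bigr => s _; rewrite /position permK.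
Qed.

Section ConsistentMetric.
Variables (R : realType) (alpha : R) (m n : nat) (sigma : profile m.+1 n).
Variable d : Defs.point n m.+1 -> Defs.point n m.+1 -> R.
Hypotheses (alpha_ge0 : 0 <= alpha) (alpha_le1 : alpha <= 1).
Hypotheses (d_metric : is_metric d) (d_consistent : consistent alpha sigma d).

Definition agent_dist i (s : nat) := d (inl i) (inr (ranking (sigma i) (inord s))).

Lemma agent_dist_position i c : agent_dist i (position sigma i c) = d (inl i) (inr c).
Proof. by rewrite /agent_dist inord_val permKV. Qed.

Lemma agent_distS i (j : 'I_(m.+1 - 1)) :
  [/\ agent_dist i j <= agent_dist i j.+1,
      join (sigma i) j = Weak -> alpha * agent_dist i j.+1 <= agent_dist i j &
      join (sigma i) j = Strong -> agent_dist i j <= alpha * agent_dist i j.+1].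
Proof.
have [d_ge0 _] := d_metric.
have ltjm : (j < m)%N by have := ltn_ord j; lia.
have := d_consistent i (inordK (ltnW ltjm)) (inordK (ltjm : (j.+1 < m.+1)%N)).
rewrite /agent_dist; case: (join (sigma i) j) => [[le_dq lt_dp]|le_dp].
  by split=> // _; apply: ltW.
split=> //.
by apply: le_trans le_dp _; rewrite ler_piMl ?d_ge0.
Qed.

Lemma agent_dist_le i s t : (s <= t)%N -> (t <= m)%N -> agent_dist i s <= agent_dist i t.
Proof.
move=> le_st le_tm; apply: nondecn_le_upto le_st le_tm => r ltrm.
have ltr : (r < m.+1 - 1)%N by rewrite subn1.
by have [] := agent_distS i (Ordinal ltr).
Qed.

Lemma dist_le_of_position i a c : (position sigma i a <= position sigma i c)%N ->
  d (inl i) (inr a) <= d (inl i) (inr c).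
Proof.
by move=> le_ac; rewrite -!agent_dist_position agent_dist_le // -ltnS ltn_ord.
Qed.

Lemma agent_lottery_le i k b : (k <= m)%N -> moderate_pref k (sigma i) ->
  \sum_c lottery alpha k (position sigma i c) * d (inr b) (inr c) <=
  (1 + Num.max alpha (t_seq alpha k)) * d (inl i) (inr b).
Proof.
move=> le_km [weak strong]; have [d_ge0 [d_sym [d_xx d_tri]]] := d_metric.
set x := agent_dist i; set r := position sigma i b.
set z := fun s : nat => d (inr b) (inr (ranking (sigma i) (inord s))).
have zE c : d (inr b) (inr c) = z (position sigma i c) by rewrite /z inord_val permKV.
under eq_bigr do rewrite zE.
rewrite (sum_position sigma i (fun s => lottery alpha k s * z s)).
have ltkN : (k < m.+1)%N by [].
have le_rm : (r <= m)%N by rewrite -ltnS ltn_ord.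
have x_ge0 s : 0 <= x s by apply: d_ge0.
have z_le s : z s <= x r + x s by rewrite /x agent_dist_position (d_sym (inl i)); apply: d_tri.
rewrite -agent_dist_position -/r -/x; case: (leqP r k) => [le_rk | lt_kr].
  have x_chain : alpha_chain alpha k x.
    move=> s ltsk; have lts : (s < m.+1 - 1)%N by rewrite subn1; apply: leq_trans ltsk le_km.
    have [? weakS _] := agent_distS i (Ordinal lts).
    by split=> //; apply/weakS/weak.
  have zr : z r = 0 by rewrite -zE d_xx.
  apply: le_trans (lottery_near_le alpha_ge0 alpha_le1 ltkN le_rk x_ge0 x_chain z_le zr) _.
  by rewrite ler_wpM2r // lerD2l le_max lexx orbT.
have ltkm : (k < m.+1 - 1)%N by rewrite subn1; apply: leq_trans lt_kr le_rm.
have [_ _ strongS] := agent_distS i (Ordinal ltkm).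
have xk_le : x k <= alpha * x r.
  have xk1_le : x k.+1 <= x r by apply: agent_dist_le.
  exact: le_trans (strongS (strong (Ordinal ltkm) erefl)) (ler_wpM2l alpha_ge0 xk1_le).
have x_le s : (s <= k)%N -> x s <= alpha * x r.
  by move=> le_sk; apply: le_trans (agent_dist_le i le_sk le_km) xk_le.
apply: le_trans (lottery_far_le alpha_ge0 alpha_le1 ltkN (x_ge0 r) x_le z_le) _.
by rewrite ler_wpM2r // lerD2l le_max lexx.
Qed.

Lemma sc_le_of_plan k a v b : (k <= m)%N -> moderate_profile k sigma ->
  dominating_plan (position sigma)
    (fun c => \sum_i lottery alpha k (position sigma i c)) (fun _ => 1) a v ->
  sc d a <= (2 + Num.max alpha (t_seq alpha k)) * sc d b.
Proof.
move=> le_km moderate [v_ge0 v_row v_col v_dom].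
have [d_ge0 [_ [_ d_tri]]] := d_metric.
have via_b j c :
    v j c * d (inl j) (inr a) <= v j c * d (inl j) (inr b) + v j c * d (inr b) (inr c).
  case: (eqVneq (v j c) 0) => [->|v_neq0]; first by rewrite !mul0r addr0.
  rewrite -mulrDr ler_wpM2l //; apply: le_trans (d_tri _ (inr b) _).
  exact: dist_le_of_position (v_dom _ _ v_neq0).
have supply : \sum_j \sum_c v j c * d (inr b) (inr c) =
    \sum_i \sum_c lottery alpha k (position sigma i c) * d (inr b) (inr c).
  rewrite exchange_big [RHS]exchange_big; apply: eq_bigr => c _.
  by rewrite -mulr_suml v_col mulr_suml.
have agents : \sum_i \sum_c lottery alpha k (position sigma i c) * d (inr b) (inr c) <=
    (1 + Num.max alpha (t_seq alpha k)) * sc d b.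
  by rewrite /sc mulr_sumr; apply: ler_sum => i _; apply: agent_lottery_le.
have sc_b_ge0 : 0 <= sc d b by apply: sumr_ge0 => i _; apply: d_ge0.
have row_sum (x : 'I_n -> R) : \sum_j \sum_c v j c * x j = \sum_j x j.
  by apply: eq_bigr => j _; rewrite -mulr_suml v_row mul1r.
apply: (@le_trans _ _ (sc d b + \sum_j \sum_c v j c * d (inr b) (inr c))).
  rewrite /sc -row_sum -(row_sum (fun j => d (inl j) (inr b))) -big_split /=.
  by apply: ler_sum => j _; rewrite -big_split /=; apply: ler_sum => c _; apply: via_b.
by rewrite supply; lra.
Qed.
End ConsistentMetric.

Lemma distortion_le (R : realType) (alpha : R) m n (sigma : profile m n) a (c : R) :
  1 <= c ->
  (forall d, is_metric d -> consistent alpha sigma d -> forall b, sc d a <= c * sc d b) ->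
  (distortion alpha sigma a <= c%:E)%E.
Proof.
move=> c_ge1 sc_le; apply: ge_ereal_sup => _ [d [d_metric d_cons] <-]; rewrite lee_fin.
have [d_ge0 _] := d_metric.
have sc_ge0 b : 0 <= sc d b by apply: sumr_ge0 => i _; apply: d_ge0.
have [a_le min_ge0] : sc d a <= c * sc_min d a /\ 0 <= sc_min d a.
  apply: (big_ind (fun x => sc d a <= c * x /\ 0 <= x)) => [|x y [? ?] [? ?]|b _].
  - by split=> //; have := sc_ge0 a; nra.
  - by rewrite minEle; case: ifP.
  - by split; [apply: sc_le|apply: sc_ge0].
have [->|min_gt0] := eqVneq (sc_min d a) 0; first by rewrite invr0 mulr0; lra.
by rewrite ler_pdivrMr ?lt_def ?min_gt0 // mulrC.
Qed.

Lemma moderate_pref_uniq m (p : pref m.+1) k k' : (k <= m)%N -> (k' <= m)%N ->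
  moderate_pref k p -> moderate_pref k' p -> k = k'.
Proof.
wlog lt_kk' : k k' / (k < k')%N => [wlog_lt le_km le_k'm pk pk'|].
  by case: (ltngtP k k') => [lt|lt|//]; [|apply: esym]; apply: wlog_lt.
move=> le_km le_k'm [_ strong] [weak _].
have ltkm : (k < m.+1 - 1)%N by rewrite subn1; apply: leq_trans lt_kk' le_k'm.
by move: (weak (Ordinal ltkm) lt_kk'); rewrite strong.
Qed.

Lemma exists_moderate_winner (R : realType) (alpha : R) m n (sigma : profile m.+1 n) :
  0 <= alpha -> alpha <= 1 ->
  exists a, forall k, (1 <= k <= m)%N -> moderate_profile k sigma ->
    (distortion alpha sigma a <= (2 + Num.max alpha (t_ alpha k))%:E)%E.
Proof.
move=> alpha_ge0 alpha_le1.
have [[k0 [/andP[_ le_k0m] moderate0]]|no_k] :=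
  pselect (exists k, (1 <= k <= m)%N /\ moderate_profile k sigma); last first.
  by exists ord0 => k k_range moderate; case: no_k; exists k.
set s := fun c => \sum_i lottery alpha k0 (position sigma i c).
have s_ge0 c : 0 <= s c by apply: sumr_ge0 => i _; apply: lottery_ge0.
have sum_s : \sum_c s c = \sum_(i < n) 1.
  rewrite exchange_big; apply: eq_bigr => i _.
  by rewrite (sum_position sigma i (lottery alpha k0)) sum_lottery.
have [a [v [plan _]]] :=
  exists_dominating_plan (position sigma) ord0 s_ge0 (fun _ => ler01) sum_s.
exists a => -[//|k] /andP[_ le_km] moderate.
have supply_k : (fun c => \sum_i lottery alpha k.+1 (position sigma i c)) = s.
  apply/funext => c; apply: eq_bigr => i _.
  by rewrite (moderate_pref_uniq le_km le_k0m (moderate i) (moderate0 i)).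
rewrite -t_seqE //; apply: distortion_le => [|d d_metric d_cons b].
  have : alpha <= Num.max alpha (t_seq alpha k.+1) by rewrite le_max lexx.
  lra.
by rewrite -supply_k in plan; apply: sc_le_of_plan plan.
Qed.

Theorem theorem2 (R : realType) (m : nat) (alpha : R) :
  (2 <= m)%N -> 0 <= alpha <= 1 ->
  exists f : forall n : nat, profile m n -> 'I_m,
    forall (k : nat), (1 <= k <= m - 1)%N ->
    forall (n : nat) (sigma : profile m n),
      moderate_profile k sigma ->
      (distortion alpha sigma (f n sigma) <= (2 + Num.max alpha (t_ alpha k))%:E)%E.
Proof.
case: m => [//|m] _ /andP[alpha_ge0 alpha_le1].
pose winner n (sigma : profile m.+1 n) := exists_moderate_winner sigma alpha_ge0 alpha_le1.
exists (fun n sigma => proj1_sig (cid (winner n sigma))) => k k_range n sigma.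
by apply: (proj2_sig (cid (winner n sigma))); rewrite subn1 in k_range.
Qed.
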